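(* For every prime $p\geq 17$, the group $PSL_2(p)$ does not satisfy the Amit–Vishne condition: there exist $g,h\in PSL_2(p)$ with $\langle g\rangle=\langle h\rangle$ such that no automorphism of $PSL_2(p)$ maps $g$ to $h$.
   Context: A finite group $G$ satisfies the Amit–Vishne condition if whenever $g,h\in G$ satisfy $\langle g\rangle=\langle h\rangle$, there is $\alpha\in\mathrm{Aut}(G)$ with $\alpha(g)=h$. *)

From HB Require Import structures.
From mathcomp Require Import all_boot all_order all_algebra all_fingroup all_solvable matrix zmodp.
Set Implicit Arguments. Unset Strict Implicit. Unset Printing Implicit Defensive.
Import GRing.Theory.

Local Open Scope group_scope.

Definition SL2 (p : nat) : {set {'GL_2['F_p]}} :=
  [set u : {'GL_2['F_p]} | (\det (GLval u) == 1)%R].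

Lemma SL2_group_set p : group_set (SL2 p).
Proof.
apply/group_setP; split.
  by rewrite inE GL_1E det1.
move=> x y; rewrite !inE GL_MxE => /eqP hx /eqP hy.
by rewrite det_mulmx hx hy mulr1.
Qed.

Canonical SL2_group p := Group (SL2_group_set p).

Definition PSL2 (p : nat) := (SL2_group p / 'Z(SL2_group p))%G.

Definition amit_vishne (gT : finGroupType) (G : {group gT}) : Prop :=
  forall g h, g \in G -> h \in G -> <[g]> = <[h]> ->
    exists2 a, a \in Aut G & a g = h.

(* Let t generate F_p^* and let g be the image in PSL_2(p) of diag(t, t^-1).
   Since diag(t, t^-1)^n = -1 for n = (p-1)/2, g has order dividing n, so g and
   g^k generate the same cyclic group for every k prime to n; when n >= 8 such a
   k can be chosen with k != +-1 (mod n).  Conjugation by g raises the image x of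
   the unipotent matrix [[1,1],[0,1]] to the power l = t^-2.  An automorphism
   sending g to g^k would send x to a nontrivial y of order p with
   y^(g^k) = y^l.  A lift of y to SL_2(p) is e(1 + A) with e = +-1 and A^2 = 0,
   so its l-th power is e^l(1 + lA); comparing traces, conjugation by
   diag(t^k, t^-k) must scale A by l, and the eigenvalues of that conjugation
   on nonzero trace-free nilpotents are t^(-+2k).  Thus t^-2 = t^(-+2k), which
   forces k = +-1 (mod n). *)

From mathcomp Require Import all_boot all_algebra all_fingroup all_solvable.
From mathcomp Require Import ring zify.
Set Implicit Arguments. Unset Strict Implicit. Unset Printing Implicit Defensive.
Import GRing.Theory.
Local Open Scope ring_scope.

Section Mx2.
Variable R : comNzRingType.
Implicit Types (a b c d k : R) (A B : 'M[R]_2).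

Definition mx2 a b c d : 'M[R]_2 :=
  \matrix_(i < 2, j < 2) if i == 0 then (if j == 0 then a else b)
                          else (if j == 0 then c else d).

Lemma ord2P (i : 'I_2) : i = 0 \/ i = 1.
Proof. by case: i => [[|[|//]]] ?; [left|right]; apply: val_inj. Qed.

Lemma mx2P A B : A 0 0 = B 0 0 -> A 0 1 = B 0 1 -> A 1 0 = B 1 0 -> A 1 1 = B 1 1 ->
  A = B.
Proof.
move=> e00 e01 e10 e11; apply/matrixP => i j.
by case: (ord2P i) => ->; case: (ord2P j) => ->.
Qed.

Lemma mx2_eta A : A = mx2 (A 0 0) (A 0 1) (A 1 0) (A 1 1).
Proof. by apply/mx2P; rewrite !mxE. Qed.

Lemma mx2_inj a b c d a' b' c' d' : mx2 a b c d = mx2 a' b' c' d' ->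
  [/\ a = a', b = b', c = c' & d = d'].
Proof.
move=> E; have := congr1 (fun A : 'M_2 => (A 0 0, A 0 1, A 1 0, A 1 1)) E.
by rewrite !mxE /= => -[].
Qed.

Lemma mul_mx2 a b c d a' b' c' d' :
  mx2 a b c d *m mx2 a' b' c' d' =
  mx2 (a * a' + b * c') (a * b' + b * d') (c * a' + d * c') (c * b' + d * d').
Proof. by apply/mx2P; rewrite !mxE !big_ord_recl big_ord0 !mxE addr0. Qed.

Lemma add_mx2 a b c d a' b' c' d' :
  mx2 a b c d + mx2 a' b' c' d' = mx2 (a + a') (b + b') (c + c') (d + d').
Proof. by apply/mx2P; rewrite !mxE. Qed.

Lemma opp_mx2 a b c d : - mx2 a b c d = mx2 (- a) (- b) (- c) (- d).
Proof. by apply/mx2P; rewrite !mxE. Qed.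

Lemma scale_mx2 k a b c d : k *: mx2 a b c d = mx2 (k * a) (k * b) (k * c) (k * d).
Proof. by apply/mx2P; rewrite !mxE. Qed.

Lemma scalar_mx2 k : k%:M = mx2 k 0 0 k.
Proof. by apply/mx2P; rewrite !mxE. Qed.

Lemma one_mx2 : 1 = mx2 1 0 0 1.
Proof. exact: scalar_mx2. Qed.

Lemma det_mx2 a b c d : \det (mx2 a b c d) = a * d - b * c.
Proof.
rewrite (expand_det_row _ 0) !big_ord_recl big_ord0 addr0.
rewrite /cofactor !det_mx11 !mxE /=.
by rewrite /bump /= expr0 expr1 mul1r mulN1r mulrN.
Qed.

Lemma det_unip_mx2 : \det (mx2 1 1 0 1) = 1.
Proof. by rewrite det_mx2 mulr1 mulr0 subr0. Qed.

Lemma det_unip_low_mx2 : \det (mx2 1 0 1 1) = 1.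
Proof. by rewrite det_mx2 mulr1 mul0r subr0. Qed.

Lemma trace_mx2 a b c d : \tr (mx2 a b c d) = a + d.
Proof. by rewrite /mxtrace !big_ord_recl big_ord0 !mxE addr0. Qed.

Lemma mx2_sqr A : A * A = \tr A *: A - (\det A)%:M.
Proof.
rewrite [A]mx2_eta; move: (A 0 0) (A 0 1) (A 1 0) (A 1 1) => a b c d.
rewrite -mulmxE mul_mx2 det_mx2 trace_mx2 scale_mx2 scalar_mx2 opp_mx2 add_mx2.
by congr mx2; ring.
Qed.

End Mx2.

Lemma expr1D_sqr0 (R : pzRingType) (A : R) n : A * A = 0 -> (1 + A) ^+ n = 1 + A *+ n.
Proof.
move=> AA; elim: n => [|n IH]; first by rewrite expr0 mulr0n addr0.
by rewrite exprSr IH mulrDl mul1r mulrDr mulr1 mulrnAl AA mul0rn addr0 mulrS addrA.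
Qed.

Lemma detX (R : comNzRingType) n (A : 'M[R]_n.+1) m : \det (A ^+ m) = \det A ^+ m.
Proof.
elim: m => [|m IH]; first by rewrite !expr0 det1.
by rewrite !exprS -mulmxE det_mulmx IH.
Qed.

Lemma pchar_expr_eq1_nilpotent (F : fieldType) (B : lalgType F) p (z : B) :
  p \in [pchar F] -> z ^+ p = 1 -> (z - 1) ^+ p = 0.
Proof.
move=> chp zp; have chB : p \in [pchar B] by rewrite pchar_lalg.
have := pFrobenius_autD_comm chB (commr1 (z - 1)).
rewrite !pFrobenius_autE expr1n subrK zp.
by move/esym/(canRL (addrK 1)); rewrite subrr.
Qed.

Section Mx2Field.
Variable F : fieldType.
Implicit Types (s e c L : F) (A Y : 'M[F]_2).

Lemma mx2_nilpotent_sqr0 A n : A ^+ n = 0 -> A * A = 0.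
Proof.
move=> An.
have /andP[n_gt0 /eqP dA] : (0 < n)%N && (\det A == 0).
  by rewrite -expf_eq0 -detX An det0.
have AA : A * A = \tr A *: A by rewrite mx2_sqr dA raddf0 subr0.
have Apow m : A ^+ m.+1 = \tr A ^+ m *: A.
  elim: m => [|m IH]; first by rewrite expr1 expr0 scale1r.
  by rewrite exprSr IH -scalerAl AA scalerA -exprSr.
have [-> | A0] := eqVneq A 0; first by rewrite mulr0.
move: An; rewrite -(prednK n_gt0) Apow => /eqP.
rewrite scaler_eq0 (negbTE A0) orbF expf_eq0 => /andP[_ /eqP tr0].
by rewrite AA tr0 scale0r.
Qed.

Lemma mx2_trace_sqr0 A : A * A = 0 -> \tr A = 0.
Proof.
move=> AA; have [-> | A0] := eqVneq A 0; first by rewrite mxtrace0.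
have dA : \det A = 0.
  by apply/eqP; rewrite -[_ == 0](expf_eq0 _ 2) -detX expr2 AA det0.
move/eqP: AA; rewrite mx2_sqr dA raddf0 subr0 scaler_eq0 (negbTE A0) orbF.
by move/eqP.
Qed.

Lemma mx2_scaled_unipotent p e Y : p \in [pchar F] -> odd p ->
  \det Y = 1 -> Y ^+ p = e%:M -> e * e = 1 /\ (e *: Y - 1) * (e *: Y - 1) = 0.
Proof.
move=> chp p_odd dY Yp.
have e2 : e ^+ 2 = 1 by rewrite -det_scalar -Yp detX dY expr1n.
split; first by rewrite -expr2.
apply: (@mx2_nilpotent_sqr0 _ p); apply: pchar_expr_eq1_nilpotent chp _.
have ep1 : e ^+ p.+1 = 1.
  by rewrite -[p.+1]odd_double_half /= p_odd -muln2 mulnC exprM e2 expr1n.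
by rewrite exprZn Yp -scalemx1 scalerA -exprSr ep1 scale1r.
Qed.

Lemma mx2_diag_conj_eigen s L A : s != 0 -> A != 0 -> L != 1 ->
  mx2 s^-1 0 0 s *m A *m mx2 s 0 0 s^-1 = L *: A -> L = s ^- 2 \/ L = s ^+ 2.
Proof.
move=> s0 + L1; rewrite [A]mx2_eta; move: (A 0 0) (A 0 1) (A 1 0) (A 1 1) => a b c d.
rewrite !mul_mx2 scale_mx2 !(mul0r, mulr0, add0r, addr0) => A0 /mx2_inj[ea eb ec ed].
have fixed0 x : x = L * x -> x = 0.
  move/eqP; rewrite -subr_eq0 -{1}[x]mul1r -mulrBl mulf_eq0 subr_eq0 eq_sym.
  by rewrite (negbTE L1) => /eqP.
have a0 : a = 0 by apply: fixed0; rewrite -ea mulrAC mulVf ?mul1r.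
have d0 : d = 0 by apply: fixed0; rewrite -ed mulrAC mulfV ?mul1r.
have [b0 | b_neq0] := eqVneq b 0.
  have [c0 | c_neq0] := eqVneq c 0; first by rewrite a0 b0 c0 d0 -scalar_mx2 raddf0 eqxx in A0.
  by right; apply: (mulIf c_neq0); rewrite -ec expr2 mulrAC.
by left; apply: (mulIf b_neq0); rewrite -eb -exprVn expr2 mulrAC.
Qed.

Lemma pchar_odd_two_neq0 p : p \in [pchar F] -> odd p -> (2%:R : F) != 0.
Proof.
move=> chp p_odd; apply/eqP => two0.
have : (2 \in [pchar F])%N by rewrite unfold_in /= two0 eqxx.
by rewrite (pcharf_eq chp) => /eqP p2; rewrite -p2 in p_odd.
Qed.

Lemma mx2_conj_diag_unipotent p s c e l Y :
    p \in [pchar F] -> odd p -> \det Y = 1 -> Y ^+ p = e%:M -> (forall k, Y != k%:M) ->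
    s != 0 -> l%:R != 1 :> F ->
    mx2 s^-1 0 0 s *m Y *m mx2 s 0 0 s^-1 = c%:M *m Y ^+ l ->
  l%:R = s ^- 2 \/ l%:R = s ^+ 2.
Proof.
move=> chp p_odd dY Yp Y_nscalar s0 l1 conjY.
have [ee AA] := mx2_scaled_unipotent chp p_odd dY Yp.
set A := e *: Y - 1 in AA.
have YE : Y = e *: (1 + A) by rewrite /A addrC subrK scalerA ee scale1r.
have A0 : A != 0.
  by apply: contra (Y_nscalar e) => /eqP A0; rewrite YE A0 addr0 scalemx1.
have e0 : e != 0 by apply: contra_eq_neq ee => ->; rewrite mul0r eq_sym oner_neq0.
set P := mx2 s^-1 0 0 s in conjY *; set Q := mx2 s 0 0 s^-1 in conjY *.
have PQ : P *m Q = 1.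
  by rewrite mul_mx2 !(mul0r, mulr0, addr0, add0r) mulVf // mulfV // -one_mx2.
have QP : Q *m P = 1.
  by rewrite mul_mx2 !(mul0r, mulr0, addr0, add0r) mulVf // mulfV // -one_mx2.
have conjA : e *: (1 + P *m A *m Q) = (c * e ^+ l) *: (1 + l%:R *: A).
  move: conjY; rewrite YE exprZn expr1D_sqr0 // mul_scalar_mx scalerA -scaler_nat.
  by rewrite -scalemxAr -scalemxAl mulmxDr mulmx1 mulmxDl PQ.
have e_eq : e = c * e ^+ l.
  (* both sides have trace twice their scalar factor, as conjugation keeps [\tr A = 0] *)
  have := congr1 mxtrace conjA.
  rewrite !mxtraceZ !mxtraceD mxtraceZ mxtrace_mulC mulmxA QP mul1mx.
  rewrite (mx2_trace_sqr0 AA) mulr0 !addr0 mxtrace1.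
  exact: (mulIf (pchar_odd_two_neq0 chp p_odd)).
apply: (mx2_diag_conj_eigen s0 A0 l1).
by move: conjA; rewrite -e_eq => /(scalerI e0)/addrI.
Qed.

End Mx2Field.

Lemma Fp_primitive_root p : prime p -> exists t : 'F_p, p.-1.-primitive_root t.
Proof.
move=> p_pr; have /cyclicP[u gen_u] := field_unit_group_cyclic [set: {unit 'F_p}]%G.
have ou : #[u]%g = p.-1 by rewrite /order -gen_u card_finField_unit card_Fp.
have p1_gt0 : (0 < p.-1)%N by rewrite -ou order_gt0.
have tn1 : val u ^+ p.-1 = 1 :> 'F_p by rewrite -FinRing.val_unitX -ou expg_order.
have [m prim_m m_dvd] := prim_order_exists p1_gt0 tn1.
suff /eqP <- : m == p.-1 by exists (val u).
rewrite eqn_dvd m_dvd -ou order_dvdn; apply/eqP/val_inj.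
by rewrite FinRing.val_unitX (prim_expr_order prim_m).
Qed.

Lemma prim_root_inv_sqr_neq (F : fieldType) n (t : F) k :
    (n.*2).-primitive_root t -> (1 < k)%N -> (k.+1 < n)%N ->
  ~ (t ^- 2 = (t ^+ k) ^- 2 \/ t ^- 2 = (t ^+ k) ^+ 2).
Proof.
move=> prim_t k_gt1 kn [/eqP|].
  rewrite -!exprM (inj_eq invr_inj) (eq_prim_root_expr prim_t) !modn_small; lia.
move=> /(congr1 (fun x => x * t ^+ 2)); rewrite mulVf ?expf_neq0 //.
  rewrite -!exprM -exprD => /esym/eqP; rewrite -(prim_order_dvd prim_t).
  by move=> /dvdn_leq; lia.
by rewrite (prim_root_eq0 prim_t) double_eq0; lia.
Qed.

Lemma prim_root_half_expr (F : fieldType) n (t : F) : (n.*2).-primitive_root t -> t ^+ n = -1.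
Proof.
move=> prim_t; have n_gt0 : (0 < n)%N by rewrite -double_gt0 (prim_order_gt0 prim_t).
have : (t ^+ n) ^+ 2 == 1 by rewrite -exprM -(prim_order_dvd prim_t) muln2.
rewrite sqrf_eq1 -(prim_order_dvd prim_t) => /orP[/dvdn_leq | /eqP //].
by rewrite -addnn; lia.
Qed.

Lemma exists_coprime_between n : (8 <= n)%N -> exists k, [/\ (1 < k)%N, (k.+1 < n)%N & coprime n k].
Proof.
move=> n8; have [n_odd | n_even] := boolP (odd n).
  by exists 2%N; split; [done | lia | rewrite coprime_sym coprime2n].
set m := n./2; have nE : n = m.*2 by rewrite -[LHS]odd_double_half (negbTE n_even).
have [m_odd | m_even] := boolP (odd m).
  exists m.+2; split; [lia | lia |].
  rewrite nE -muln2 coprimeMl coprime2n /= m_odd andbT.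
  by rewrite -addn2 /coprime gcdnDl -/(coprime m 2) coprime_sym coprime2n.
exists m.+1; split; [lia | lia |].
by rewrite nE -muln2 coprimeMl coprime2n /= m_even andbT coprime_sym coprimeSn.
Qed.

Section PSL2.
Variable p : nat.
Hypothesis p_pr : prime p.
Local Notation GL2 := {'GL_2['F_p]}.
Local Notation ZSL := 'Z(SL2_group p)%G.
Local Notation coset := (coset ZSL).
Implicit Types (s t : 'F_p) (M : 'M['F_p]_2) (x X Y : GL2).

(* The identity when [M] is singular. *)
Definition GLof M : GL2 := insubd (1%g : GL2) M.

Lemma GLofK M : \det M = 1 -> GLval (GLof M) = M.
Proof. by move=> dM; rewrite /GLof insubdK // unfold_in /= unitmxE dM unitr1. Qed.

Lemma GLof_SL2 M : \det M = 1 -> GLof M \in SL2 p.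
Proof. by move=> dM; rewrite inE GLofK // dM eqxx. Qed.

Lemma GLvalX x n : GLval (x ^+ n)%g = GLval x ^+ n.
Proof.
elim: n => [|n IH]; first by rewrite expg0 expr0 GL_1E.
by rewrite expgS GL_ME IH exprS.
Qed.

Lemma SL2_det x : x \in SL2 p -> \det (GLval x) = 1.
Proof. by rewrite inE => /eqP. Qed.

Lemma SL2_norm_center x : x \in SL2 p -> x \in 'N(ZSL)%g.
Proof. exact/subsetP/normal_norm/center_normal. Qed.

Lemma SL2_center_scalar z : z \in ZSL -> exists k, GLval z = k%:M.
Proof.
case/centerP => _ cz.
have commz M : \det M = 1 -> GLval z *m M = M *m GLval z.
  move=> dM; have /(congr1 (@GLval 2 _)) := cz _ (GLof_SL2 dM).
  by rewrite !GL_MxE GLofK.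
move: (commz _ (det_unip_mx2 _)) (commz _ (det_unip_low_mx2 _)); rewrite [GLval z]mx2_eta !mul_mx2.
move: (GLval z 0 0) (GLval z 0 1) (GLval z 1 0) (GLval z 1 1) => a b c d.
move=> /mx2_inj[u1 u2 _ _] /mx2_inj[l1 _ _ _].
rewrite !(mulr1, mulr0, mul1r, mul0r, addr0, add0r) in u1 u2 l1.
have c0 : c = 0 by apply/(addrI a); rewrite addr0 -u1.
have b0 : b = 0 by apply/(addrI a); rewrite addr0 l1.
have da : d = a by move: u2; rewrite b0 addr0 add0r.
by exists a; rewrite scalar_mx2 c0 b0 da.
Qed.

Lemma scalar_SL2_center (y : GL2) k : y \in SL2 p -> GLval y = k%:M -> y \in ZSL.
Proof.
move=> yS yk; apply/centerP; split => // w _.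
apply: val_inj; change (GLval (y * w)%g = GLval (w * y)%g).
by rewrite !GL_MxE yk scalar_mxC.
Qed.

Lemma PSL2_conj_lift X Y l : X \in SL2 p -> Y \in SL2 p ->
    (coset Y ^ coset X = coset Y ^+ l)%g ->
  exists c, GLval X^-1 *m GLval Y *m GLval X = c%:M *m GLval Y ^+ l.
Proof.
move=> XS YS; rewrite -morphJ -?morphX ?SL2_norm_center //.
case/kercoset_rcoset; rewrite ?SL2_norm_center ?groupJ ?groupX //.
move=> z /SL2_center_scalar[c zc] /(congr1 (@GLval 2 _)) YXz; exists c.
by move: YXz; rewrite conjgE !GL_MxE GLvalX zc mulmxA.
Qed.

Lemma PSL2_unipotent_lift y : y \in PSL2 p -> (y ^+ p = 1)%g -> y != 1%g ->
  exists2 Y, Y \in SL2 p & [/\ y = coset Y, exists e, GLval Y ^+ p = e%:M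
                             & forall k, GLval Y != k%:M].
Proof.
case/morphimP => Y _ YS -> yp y1; exists Y => //; split => //.
  have /SL2_center_scalar[e] : (Y ^+ p)%g \in ZSL.
    by apply: coset_idr; rewrite ?SL2_norm_center ?groupX ?morphX ?SL2_norm_center.
  by rewrite GLvalX; exists e.
move=> k; apply: contra y1 => /eqP Yk.
by apply/eqP/coset_id/(scalar_SL2_center YS Yk).
Qed.

Definition diag_SL2 s : GL2 := GLof (mx2 s 0 0 s^-1).
Definition unip_SL2 : GL2 := GLof (mx2 1 1 0 1).

Lemma det_diag_mx2 s : s != 0 -> \det (mx2 s 0 0 s^-1) = 1.
Proof. by move=> s0; rewrite det_mx2 mulfV // mulr0 subr0. Qed.

Lemma diag_SL2K s : s != 0 -> GLval (diag_SL2 s) = mx2 s 0 0 s^-1.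
Proof. by move/det_diag_mx2/GLofK. Qed.

Lemma diag_SL2_in s : s != 0 -> diag_SL2 s \in SL2 p.
Proof. by move/det_diag_mx2/GLof_SL2. Qed.

Lemma diag_SL2X s n : s != 0 -> (diag_SL2 s ^+ n)%g = diag_SL2 (s ^+ n).
Proof.
move=> s0; apply: val_inj; rewrite /= GLvalX !diag_SL2K ?expf_neq0 //.
elim: n => [|n IH]; first by rewrite !expr0 invr1 one_mx2.
rewrite exprS IH -mulmxE mul_mx2 !(mulr0, mul0r, addr0, add0r) !exprS invfM.
by rewrite mulrC.
Qed.

Lemma diag_SL2V s : s != 0 -> GLval (diag_SL2 s)^-1%g = mx2 s^-1 0 0 s.
Proof.
move=> s0; rewrite GL_VE; apply: (mulrI (GL_unit (diag_SL2 s))).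
rewrite mulrV ?GL_unit // diag_SL2K // -mulmxE mul_mx2 one_mx2.
by rewrite !(mulr0, mul0r, addr0, add0r) mulfV ?mulVf.
Qed.

Lemma unip_SL2_in : unip_SL2 \in SL2 p.
Proof. exact/GLof_SL2/det_unip_mx2. Qed.

Lemma unip_SL2X n : GLval (unip_SL2 ^+ n)%g = mx2 1 n%:R 0 1.
Proof.
rewrite GLvalX GLofK ?det_unip_mx2 //; elim: n => [|n IH].
  by rewrite expr0 one_mx2.
by rewrite exprS IH -mulmxE mul_mx2 !(mulr0, mul0r, mulr1, mul1r, addr0, add0r) addrC -mulrS.
Qed.

Lemma PSL2_diag_order t n : t != 0 -> t ^+ n = -1 -> (coset (diag_SL2 t) ^+ n)%g = 1%g.
Proof.
move=> t0 tn; rewrite -morphX ?SL2_norm_center ?diag_SL2_in //.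
apply/coset_id/(@scalar_SL2_center _ (-1)); first by rewrite groupX ?diag_SL2_in.
by rewrite diag_SL2X // diag_SL2K ?expf_neq0 // tn invrN1 scalar_mx2.
Qed.

Lemma PSL2_unip_conj_diag t l : t != 0 -> l%:R = t ^- 2 ->
  (coset unip_SL2 ^ coset (diag_SL2 t) = coset unip_SL2 ^+ l)%g.
Proof.
move=> t0 lE.
rewrite -morphJ -?morphX ?SL2_norm_center ?diag_SL2_in ?unip_SL2_in //; congr coset.
apply: val_inj; change (GLval ((diag_SL2 t)^-1 * (unip_SL2 * diag_SL2 t))%g
                        = GLval (unip_SL2 ^+ l)%g).
rewrite !GL_MxE diag_SL2V // diag_SL2K // unip_SL2X GLofK ?det_unip_mx2 // !mul_mx2 lE.
by congr mx2; rewrite ?exprVn; field.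
Qed.

Lemma PSL2_unip_nontrivial : coset unip_SL2 != 1%g.
Proof.
apply/negP => /eqP /coset_idr; rewrite SL2_norm_center ?unip_SL2_in //.
move=> /(_ isT) /SL2_center_scalar [c]; rewrite GLofK ?det_unip_mx2 //.
by rewrite scalar_mx2 => /mx2_inj [_ /eqP]; rewrite oner_eq0.
Qed.

Lemma PSL2_unip_exp_char : (coset unip_SL2 ^+ p = 1)%g.
Proof.
rewrite -morphX ?SL2_norm_center ?unip_SL2_in //.
suff -> : (unip_SL2 ^+ p)%g = 1%g by rewrite morph1.
apply: val_inj; change (GLval (unip_SL2 ^+ p)%g = 1).
by rewrite unip_SL2X (pchar_Fp_0 p_pr) -one_mx2.
Qed.

Lemma PSL2_twisted_unipotent y s l : odd p ->
    y \in PSL2 p -> (y ^+ p = 1)%g -> y != 1%g -> s != 0 -> l%:R != 1 :> 'F_p ->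
    (y ^ coset (diag_SL2 s) = y ^+ l)%g ->
  l%:R = s ^- 2 \/ l%:R = s ^+ 2.
Proof.
move=> p_odd yG yp y1 s0 l1.
have [Y YS [-> [e Ye] Y_nscalar]] := PSL2_unipotent_lift yG yp y1.
case/(PSL2_conj_lift (diag_SL2_in s0) YS) => c.
rewrite diag_SL2V // diag_SL2K // => conjY.
exact: mx2_conj_diag_unipotent (pchar_Fp p_pr) p_odd (SL2_det YS) Ye Y_nscalar s0 l1 conjY.
Qed.

Lemma PSL2_Aut_diag_power a t k : odd p -> t != 0 -> t ^+ 2 != 1 -> a \in Aut (PSL2 p) ->
    a (coset (diag_SL2 t)) = (coset (diag_SL2 t) ^+ k)%g ->
  t ^- 2 = (t ^+ k) ^- 2 \/ t ^- 2 = (t ^+ k) ^+ 2.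
Proof.
move=> p_odd t0 t2 aA agh; set x := coset unip_SL2; set g := coset (diag_SL2 t).
have [l lE] : exists l : nat, l%:R = t ^- 2 by exists (nat_of_ord (t ^- 2)); rewrite natr_Zp.
have l1 : l%:R != 1 :> 'F_p by rewrite lE invr_eq1.
have xG : x \in PSL2 p by rewrite mem_quotient ?unip_SL2_in.
have gG : g \in PSL2 p by rewrite mem_quotient ?diag_SL2_in.
rewrite -lE; apply: (PSL2_twisted_unipotent (y := a x)) => //.
- exact: (Aut_closed aA xG).
- by rewrite -(autmE aA) -(morphX _ p xG) PSL2_unip_exp_char morph1.
- apply: contra PSL2_unip_nontrivial => /eqP ax1; apply/eqP/(@perm_inj _ a).
  by rewrite ax1 -(autmE aA) morph1.
- by rewrite expf_neq0.
have gDom : diag_SL2 t \in 'N(ZSL)%g by rewrite SL2_norm_center ?diag_SL2_in.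
rewrite -diag_SL2X // (morphX _ k gDom) -/g -agh -(autmE aA) -(morphJ _ xG gG).
by rewrite (PSL2_unip_conj_diag t0 lE) (morphX _ l xG).
Qed.

End PSL2.

Local Close Scope ring_scope.

Theorem mainTheorem8 (p : nat) : prime p -> 17 <= p -> ~ amit_vishne (PSL2 p).
Proof.
move=> p_pr p17 AV.
have p_odd : odd p by case: (even_prime p_pr) => // p2; rewrite p2 in p17.
set n := p.-1./2.
have p1E : p.-1 = n.*2.
  move: p_odd; rewrite -[in odd p](prednK (prime_gt0 p_pr)) /= => /negbTE p1_even.
  by rewrite -[LHS]odd_double_half p1_even.
have n8 : 8 <= n by move: p1E; rewrite -muln2; lia.
have [t prim_t] := Fp_primitive_root p_pr; rewrite p1E in prim_t.
have t0 : (t != 0)%R by rewrite (prim_root_eq0 prim_t) double_eq0; lia.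
have t2 : (t ^+ 2 != 1)%R.
  by rewrite -(prim_order_dvd prim_t); apply/negP => /dvdn_leq; lia.
have [k [k_gt1 kn n_k]] := exists_coprime_between n8.
set g := coset 'Z(SL2_group p) (diag_SL2 t).
have gG : g \in PSL2 p by rewrite mem_quotient ?diag_SL2_in.
have cyc_gk : <[g]>%g = <[g ^+ k]>%g.
  apply/eqP; rewrite -/(generator _ _) generator_coprime (coprime_dvdl _ n_k) //.
  by rewrite order_dvdn PSL2_diag_order ?prim_root_half_expr.
have [a aA agk] := AV g (g ^+ k)%g gG (groupX k gG) cyc_gk.
exact: prim_root_inv_sqr_neq prim_t k_gt1 kn (PSL2_Aut_diag_power p_pr p_odd t0 t2 aA agk).
Qed.
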